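(* Let $w,c\ge 0$ and let $(W_1,\ldots,W_n)$ be a $w$-colourable grading of a graph $G$ with $\chi(G)>w+2c$. Then there exist subsets $X,Y$ of $V(G)$ such that: $G[X]$ and $G[Y]$ are both connected; every vertex in $Y$ is earlier than every vertex in $X$; some vertex in $X$ has a neighbour in $Y$; and $\chi(X)>c$ and $\chi(Y)>c$.
   Context: Graphs are finite and simple. For $X\subseteq V(G)$, $G[X]$ is the induced subgraph and $\chi(X)$ means $\chi(G[X])$. A grading of $G$ is a sequence $(W_1,\ldots,W_n)$ of pairwise disjoint subsets of $V(G)$ with union $V(G)$; it is $w$-colourable if $\chi(G[W_i])\le w$ for $1\le i\le n$. A vertex $u$ is earlier than a vertex $v$ (with respect to the grading) if $u\in W_i$ and $v\in W_j$ with $i<j$. *)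

From mathcomp Require Import all_boot.
Set Implicit Arguments. Unset Strict Implicit. Unset Printing Implicit Defensive.

Definition simple_graph (T : finType) (e : rel T) : Prop :=
  symmetric e /\ irreflexive e.

Definition colourable (T : finType) (e : rel T) (X : {set T}) (k : nat) : bool :=
  [exists f : {ffun T -> 'I_k},
     [forall x in X, forall y in X, e x y ==> (f x != f y)]].

Lemma chi_ex (T : finType) (e : rel T) (X : {set T}) :
  exists k, colourable e X k || (k == #|T|.+1).
Proof. by exists #|T|.+1; rewrite eqxx orbT. Qed.

(* chromatic number chi(G[X]) = least k such that G[X] is k-colourable
   (for irreflexive e this is attained at some k <= #|T|, so the disjunct
   k = #|T|.+1 never matters). *)
Definition chi (T : finType) (e : rel T) (X : {set T}) : nat :=
  ex_minn (chi_ex e X).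

Definition induced_connected (T : finType) (e : rel T) (X : {set T}) : Prop :=
  X != set0 /\
  forall x y, x \in X -> y \in X ->
    connect [rel u v | (u \in X) && (v \in X) && e u v] x y.

Definition grading (T : finType) (n : nat) (W : 'I_n -> {set T}) : Prop :=
  (forall i j, i != j -> [disjoint W i & W j]) /\
  \bigcup_(i < n) W i = [set: T].

Definition w_colourable_grading (T : finType) (e : rel T) (n : nat)
  (W : 'I_n -> {set T}) (w : nat) : Prop :=
  grading W /\ forall i, chi e (W i) <= w.

Definition earlier (T : finType) (n : nat) (W : 'I_n -> {set T}) (u v : T) : Prop :=
  exists i j : 'I_n, [/\ u \in W i, v \in W j & (i < j)%N].

From mathcomp Require Import all_boot.
From Stdlib Require Import Classical.
Set Implicit Arguments. Unset Strict Implicit. Unset Printing Implicit Defensive.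

(* Suppose there is no such pair. Call a vertex attached if it has a neighbour
   in a connected set of strictly earlier vertices of chromatic number > c.
   Each component of the attached vertices is c-colourable, for otherwise it
   would form a pair with the set attaching its earliest vertex. Each component
   K of the unattached vertices is (w + c)-colourable: if x0 is a latest vertex
   of K, the vertices of K at the level of x0 lie in one w-colourable block,
   and each component Z of the earlier ones is c-colourable, for otherwise the
   first vertex outside Z on a path in K towards x0 would be attached.
   Hence chi(G) <= c + (w + c). *)

Lemma connect_exit (T : finType) (r : rel T) (Z : {set T}) x y :
  connect r x y -> x \in Z -> y \notin Z ->
  exists u u', [/\ u \in Z, u' \notin Z & r u u'].
Proof.
move=> /connectP [p]; elim: p x => [|z p IHp] x /=; first by move=> _ -> ->.
move=> /andP [rxz pz] ey xZ yZ.
have [zZ|zZ] := boolP (z \in Z); first exact: IHp pz ey zZ yZ.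
by exists x, z.
Qed.

Section InducedSubgraphs.

Variables (T : finType) (e : rel T).
Hypothesis e_sym : symmetric e.
Implicit Types (S K X : {set T}) (a v x y : T).

Definition induced_rel (S : {set T}) : rel T :=
  [rel u v | (u \in S) && (v \in S) && e u v].

Definition component (S : {set T}) (v : T) : {set T} :=
  [set u in S | connect (induced_rel S) v u].

Definition connectedb (X : {set T}) : bool :=
  (X != set0) && [forall x in X, forall y in X, connect (induced_rel X) x y].

Lemma connectedbP X : reflect (induced_connected e X) (connectedb X).
Proof.
apply: (iffP andP) => -[X0 conX]; split=> //.
  by move=> x y xX yX; move/forall_inP: conX => /(_ x xX) /forall_inP /(_ y yX).
by apply/forall_inP => x xX; apply/forall_inP => y yX; apply: conX.
Qed.

Lemma connect_induced_sym S : connect_sym (induced_rel S).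
Proof.
apply: sym_connect_sym => u v; rewrite /induced_rel /= e_sym.
by case: (u \in S); case: (v \in S).
Qed.

Lemma mem_component S v : v \in S -> v \in component S v.
Proof. by move=> vS; rewrite inE vS connect0. Qed.

Lemma component_sub S v : component S v \subset S.
Proof. by apply/subsetP => u; rewrite inE => /andP []. Qed.

Lemma component_eq S v x : x \in component S v -> component S x = component S v.
Proof.
rewrite inE => /andP [xS vx]; apply/setP => u; rewrite !inE.
case: (u \in S) => //=; apply/idP/idP; first exact: connect_trans.
by apply: connect_trans; rewrite connect_induced_sym.
Qed.

Lemma mem_component_edge S x y :
  x \in S -> y \in S -> e x y -> y \in component S x.
Proof. by move=> xS yS exy; rewrite inE yS connect1 // /induced_rel /= xS yS. Qed.

Lemma connect_component S v x y :
  x \in component S v -> connect (induced_rel S) x y ->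
  connect (induced_rel (component S v)) x y.
Proof.
move=> xC /connectP [p]; elim: p x xC => [|z p IHp] x xC /=.
  by move=> _ ->.
move=> /andP [/andP [/andP [xS zS] exz] pz] ey.
have zC : z \in component S v.
  by rewrite -(component_eq xC) mem_component_edge.
by apply: connect_trans (IHp z zC pz ey); rewrite connect1 // /induced_rel /= xC zC.
Qed.

Lemma component_connected S v : v \in S -> connectedb (component S v).
Proof.
move=> vS; apply/connectedbP; split; first by apply/set0Pn; exists v; apply: mem_component.
move=> x y xC; rewrite inE => /andP [_ vy]; apply: connect_component (xC) _.
move: xC; rewrite inE => /andP [_ vx].
by apply: connect_trans vy; rewrite connect_induced_sym.
Qed.

Lemma component_boundary S K a x :
  S \subset K -> induced_connected e K -> a \in S -> x \in K ->
  x \notin component S a ->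
  exists u u', [/\ u \in component S a, u' \in K, u' \notin S & e u u'].
Proof.
move=> /subsetP SK [_ conK] aS xK xC.
have [u [u' [uC u'C /andP [/andP [_ u'K] euu']]]] :=
  connect_exit (conK a x (SK a aS) xK) (mem_component aS) xC.
exists u, u'; split=> //; apply: contra u'C => u'S.
have uS : u \in S by apply: (subsetP (component_sub S a)).
by rewrite -(component_eq uC) mem_component_edge.
Qed.

End InducedSubgraphs.

Section Colourings.

Variables (T : finType) (e : rel T).
Implicit Types (A B S X Y : {set T}).

Definition proper_colouring k (X : {set T}) (f : {ffun T -> 'I_k}) : bool :=
  [forall x in X, forall y in X, e x y ==> (f x != f y)].

Lemma proper_colouringP k X (f : {ffun T -> 'I_k}) :
  reflect (forall x y, x \in X -> y \in X -> e x y -> f x != f y)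
          (proper_colouring X f).
Proof.
apply: (iffP forall_inP) => [col x y xX yX exy|col x xX].
  by move/forall_inP: (col x xX) => /(_ y yX) /implyP; apply.
by apply/forall_inP => y yX; apply/implyP; apply: col.
Qed.

Lemma colourableS X Y k : Y \subset X -> colourable e X k -> colourable e Y k.
Proof.
move=> /subsetP YX /existsP [f /proper_colouringP col].
by apply/existsP; exists f; apply/proper_colouringP => x y /YX xX /YX; apply: col.
Qed.

Lemma colourable_widen X k k' : k <= k' -> colourable e X k -> colourable e X k'.
Proof.
move=> le_kk' /existsP [f /proper_colouringP col].
apply/existsP; exists [ffun x => widen_ord le_kk' (f x)].
by apply/proper_colouringP => x y xX yX exy; rewrite !ffunE; apply: col.
Qed.

Lemma colourableU A B a b :
  colourable e A a -> colourable e B b -> colourable e (A :|: B) (a + b).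
Proof.
move=> /existsP [fA /proper_colouringP colA] /existsP [fB /proper_colouringP colB].
apply/existsP; exists [ffun v => if v \in A then lshift b (fA v) else rshift a (fB v)].
apply/proper_colouringP => x y; rewrite !inE !ffunE => xAB yAB exy.
case xA: (x \in A); case yA: (y \in A); rewrite ?eq_shift //; first exact: colA.
by move: xAB yAB; rewrite xA yA => /= xB yB; apply: colB.
Qed.

(* Colourings are maps on all of [T], so [set0] is not [0]-colourable unless
   [T] is empty. *)
Lemma colourableU_nonempty A B a b :
  (A != set0 -> colourable e A a) -> (B != set0 -> colourable e B b) ->
  A :|: B != set0 -> colourable e (A :|: B) (a + b).
Proof.
move=> colA colB; have [->|A0] := eqVneq A set0.
  by rewrite set0U => /colB; apply: colourable_widen; rewrite leq_addl.
have [-> _|B0] := eqVneq B set0; last by rewrite colourableU ?colA ?colB.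
by rewrite setU0; apply: colourable_widen (colA A0); rewrite leq_addr.
Qed.

Hypothesis e_sym : symmetric e.

(* The colouring of each component is chosen as a function of the component
   itself, so adjacent vertices, which share their component, use the same one. *)
Lemma colourable_components S m :
  S != set0 -> {in S, forall v, colourable e (component e S v) m} ->
  colourable e S m.
Proof.
move=> /set0Pn [v0 v0S] colC.
have [f0 _] := existsP (colC v0 v0S).
pose g C := odflt f0 [pick f | proper_colouring C f].
have gP v : v \in S -> proper_colouring (component e S v) (g (component e S v)).
  move=> vS; rewrite /g; case: pickP => [f //|no_col].
  have [f colf] := existsP (colC v vS).
  by move: (no_col f); rewrite /= /proper_colouring colf.
apply/existsP; exists [ffun v => g (component e S v) v].
apply/proper_colouringP => x y xS yS exy; rewrite !ffunE.
have yC := mem_component_edge xS yS exy.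
rewrite (component_eq e_sym yC).
by move/proper_colouringP: (gP x xS); apply=> //; apply: mem_component.
Qed.

Lemma chi_leq X k : colourable e X k -> chi e X <= k.
Proof. by move=> colX; rewrite /chi; case: ex_minnP => m _; apply; rewrite colX. Qed.

Hypothesis e_irr : irreflexive e.

Lemma colourable_card X : colourable e X #|T|.
Proof.
apply/existsP; exists [ffun x => enum_rank x].
apply/proper_colouringP => x y _ _ exy; rewrite !ffunE (inj_eq enum_rank_inj).
by apply: contraTneq exy => ->; rewrite e_irr.
Qed.

Lemma colourable_chi X : colourable e X (chi e X).
Proof.
rewrite /chi; case: ex_minnP => m /orP [//|/eqP ->] /(_ #|T|).
by rewrite colourable_card ltnn => /(_ isT).
Qed.

Lemma ltn_chi X k : (k < chi e X) = ~~ colourable e X k.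
Proof.
apply/idP/idP => [|/negP ncol]; first by apply: contraL => /chi_leq; rewrite leqNgt.
by rewrite ltnNge; apply: contra_notN ncol => /colourable_widen; apply; apply: colourable_chi.
Qed.

End Colourings.

Section Levels.

Variables (T : finType) (n : nat) (W : 'I_n -> {set T}).

(* The index of the block containing [v]; the default [0] for a vertex in no
   block never occurs for a grading. *)
Definition level (v : T) : nat :=
  if [pick i | v \in W i] is Some i then val i else 0.

Hypothesis W_grading : grading W.

Lemma levelE v i : v \in W i -> level v = i.
Proof.
move=> vi; rewrite /level; case: pickP => [j vj|/(_ i)]; last by rewrite vi.
have [-> //|ji] := eqVneq j i.
by rewrite (disjointFr (W_grading.1 j i ji) vj) in vi.
Qed.

Lemma level_block v : exists2 i : 'I_n, v \in W i & level v = i.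
Proof.
have : v \in \bigcup_(i < n) W i by rewrite W_grading.2 inE.
by case/bigcupP => i _ vi; exists i; last apply: levelE.
Qed.

Lemma earlier_level u v : level u < level v -> earlier W u v.
Proof.
have [i ui ->] := level_block u; have [j vj ->] := level_block v.
by exists i, j.
Qed.

Lemma mem_block_level u v i : u \in W i -> level v = level u -> v \in W i.
Proof.
move=> ui; have [j vj ->] := level_block v; rewrite (levelE ui) => /val_inj ji.
by rewrite -ji.
Qed.

End Levels.

Section NoSeparatedPair.

Variables (T : finType) (e : rel T) (w c n : nat) (W : 'I_n -> {set T}).
Hypotheses (e_sym : symmetric e) (e_irr : irreflexive e) (W_grading : grading W).
Hypothesis colourable_W : forall i, colourable e (W i) w.
Local Notation level := (level W).

Hypothesis no_pair : forall X Y x y,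
  induced_connected e X -> induced_connected e Y ->
  c < chi e X -> c < chi e Y -> {in Y & X, forall y x, level y < level x} ->
  x \in X -> y \in Y -> ~~ e x y.

Definition attached (v : T) : bool :=
  [exists Y : {set T}, [&& connectedb e Y, c < chi e Y,
     [forall y in Y, level y < level v] & [exists y in Y, e v y]]].

Local Notation U := [set v | attached v].

Lemma attachedI Y v y :
  induced_connected e Y -> c < chi e Y -> {in Y, forall y, level y < level v} ->
  y \in Y -> e v y -> attached v.
Proof.
move=> /connectedbP conY bigY Y_before yY evy; apply/existsP; exists Y.
rewrite conY bigY /=; apply/andP; split; first exact/forall_inP.
by apply/existsP; exists y; rewrite yY.
Qed.

Lemma colourable_attached_component v : v \in U -> colourable e (component e U v) c.
Proof.
move=> vU; apply: contraT; rewrite -ltn_chi // => bigX.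
have [x xX x_min] := arg_minnP level (mem_component e vU).
have /existsP [Y /and4P [/connectedbP conY bigY /forall_inP Y_before]] : attached x.
  by have := subsetP (component_sub e U v) x xX; rewrite inE.
case/existsP => y /andP [yY exy].
have Y_before_X : {in Y & component e U v, forall y x, level y < level x}.
  by move=> y' x' y'Y x'X; apply: leq_trans (Y_before y' y'Y) (x_min x' x'X).
have /connectedbP conX := component_connected e_sym vU.
by rewrite (negbTE (no_pair conX conY bigX bigY Y_before_X xX yY)) in exy.
Qed.

Lemma colourable_unattached_component v :
  v \in ~: U -> colourable e (component e (~: U) v) (w + c).
Proof.
move=> vN; set K := component e (~: U) v.
have /connectedbP conK := component_connected e_sym vN.
have [x0 x0K x0_max] := arg_maxnP level (mem_component e vN).
have [i0 x0i0 _] := level_block W_grading x0.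
set A := [set u in K | level u < level x0].
have memA u : (u \in A) = (u \in K) && (level u < level x0) by rewrite !inE.
have AK : A \subset K by apply/subsetP => u; rewrite memA => /andP [].
have KAW : K \subset A :|: W i0.
  apply/subsetP => u uK; rewrite in_setU memA uK /=; case: ltnP => //= x0_le_u.
  apply: (mem_block_level W_grading x0i0); apply/eqP.
  by rewrite eqn_leq x0_le_u andbT; apply: x0_max.
apply: colourableS KAW _; rewrite addnC.
apply: colourableU_nonempty => [A0||]; last 2 first.
- by move=> _; apply: colourable_W.
- by apply/set0Pn; exists x0; rewrite inE x0i0 orbT.
apply: (colourable_components e_sym A0) => a aA; set Z := component e A a.
apply: contraT; rewrite -ltn_chi // => bigZ.
have x0Z : x0 \notin Z.
  by apply/negP => /(subsetP (component_sub e A a)); rewrite memA ltnn andbF.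
have [u [u' [uZ u'K u'A euu']]] := component_boundary e_sym AK conK aA x0K x0Z.
have u'_level : level u' = level x0.
  have u'_le : level u' <= level x0 := x0_max u' u'K.
  by apply/eqP; rewrite eqn_leq u'_le /=; move: u'A; rewrite memA u'K -leqNgt.
have /connectedbP conZ := component_connected e_sym aA.
have : attached u'.
  apply: attachedI conZ bigZ _ uZ _; last by rewrite e_sym.
  by move=> z /(subsetP (component_sub e A a)); rewrite memA u'_level => /andP [].
by have := subsetP (component_sub e (~: U) v) u' u'K; rewrite !inE => /negP.
Qed.

Lemma chi_setT_leq : chi e [set: T] <= w + 2 * c.
Proof.
have [T0|T_gt0] := posnP #|T|.
  by apply: leq_trans (chi_leq (colourable_card e_irr _)) _; rewrite T0.
apply: chi_leq; rewrite -(setUCr U) mul2n -addnn addnCA.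
apply: colourableU_nonempty => [U0|N0|]; last by rewrite setUCr -cards_eq0 cardsT -lt0n.
- apply: (colourable_components e_sym U0) => v.
  exact: colourable_attached_component.
- apply: (colourable_components e_sym N0) => v.
  exact: colourable_unattached_component.
Qed.

End NoSeparatedPair.

Theorem mainTheorem2 (T : finType) (e : rel T) (w c n : nat)
  (W : 'I_n -> {set T}) :
  simple_graph e ->
  w_colourable_grading e W w ->
  w + 2 * c < chi e [set: T] ->
  exists X Y : {set T},
    [/\ induced_connected e X /\ induced_connected e Y,
        (forall y x, y \in Y -> x \in X -> earlier W y x),
        (exists x y, [/\ x \in X, y \in Y & e x y]),
        c < chi e X & c < chi e Y].
Proof.
move=> [e_sym e_irr] [W_grading chi_W] chi_gt; apply: NNPP => no_pair.
move: chi_gt; rewrite ltnNge => /negP; apply.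
apply: (chi_setT_leq e_sym e_irr W_grading) => [i|X Y x y conX conY bigX bigY XY xX yY].
  exact: colourable_widen (chi_W i) (colourable_chi e_irr _).
apply/negP => exy; apply: no_pair; exists X, Y; split=> //.
- by move=> y' x' y'Y x'X; apply: earlier_level (XY y' x' y'Y x'X).
- by exists x, y.
Qed.
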